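(* Let $d\ge 2$, $n\ge 36$, $0<\varepsilon\le\frac15$ and $0<\kappa\le\frac16\varepsilon^2$. Let $L_1,\dots,L_n\in\mathrm{GL}_d(\mathbb R)$ satisfy $\mathrm{gr}(L_i)\ge\kappa^{-1}$ for all $i\in[n]$ and $\rho(L_i,L_{i+1})\ge\varepsilon$ for all $i\in[n-1]$. Then $$e^{-11n\kappa/\varepsilon^2}\le\frac{\rho(L_1,L_2,\dots,L_n)}{\rho(L_1,L_2)\cdots\rho(L_{n-1},L_n)}\le e^{11n\kappa/\varepsilon^2}.$$
   Context: $\|\cdot\|$ is the operator norm. For $L\in\mathrm{GL}_d(\mathbb R)$ with singular values $s_1(L)\ge s_2(L)\ge\dots\ge s_d(L)>0$, the gap ratio is $\mathrm{gr}(L)=s_1(L)/s_2(L)$. For $L_1,\dots,L_m\in\mathrm{GL}_d(\mathbb R)$, $\rho(L_1,\dots,L_m)=\frac{\|L_m\cdots L_2L_1\|}{\|L_m\|\cdots\|L_1\|}$. *)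

(* classical reals (exp needed). d x d real matrices are
   represented as functions nat -> nat -> R, only entries with indices < d
   being meaningful; vectors in R^d as nat -> R. *)
From Stdlib Require Import Reals Lra ClassicalEpsilon.
Open Scope R_scope.

Fixpoint sumR (n : nat) (f : nat -> R) : R :=
  match n with O => 0 | S k => sumR k f + f k end.

Fixpoint prodR (n : nat) (f : nat -> R) : R :=
  match n with O => 1 | S k => prodR k f * f k end.

Definition Mat := nat -> nat -> R.
Definition Vec := nat -> R.

Definition idM : Mat := fun i j => if Nat.eqb i j then 1 else 0.
Definition mulM (d : nat) (A B : Mat) : Mat :=
  fun i j => sumR d (fun k => A i k * B k j).
Definition applyM (d : nat) (A : Mat) (x : Vec) : Vec :=
  fun i => sumR d (fun j => A i j * x j).

Definition vnorm (d : nat) (x : Vec) : R := sqrt (sumR d (fun i => x i ^ 2)).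

Definition opnorm (d : nat) (A : Mat) : R :=
  epsilon (inhabits 0)
    (is_lub (fun r => exists x : Vec, vnorm d x = 1 /\ r = vnorm d (applyM d A x))).

Definition invertible (d : nat) (A : Mat) : Prop :=
  exists B : Mat, forall i j, (i < d)%nat -> (j < d)%nat ->
    mulM d B A i j = idM i j /\ mulM d A B i j = idM i j.

Definition orthogonal (d : nat) (U : Mat) : Prop :=
  forall i j, (i < d)%nat -> (j < d)%nat ->
    sumR d (fun k => U k i * U k j) = idM i j.

Definition is_svd (d : nat) (A U : Mat) (s : nat -> R) (V : Mat) : Prop :=
  orthogonal d U /\ orthogonal d V /\
  (forall k, (k < d)%nat -> 0 <= s k) /\
  (forall k, (S k < d)%nat -> s (S k) <= s k) /\
  (forall i j, (i < d)%nat -> (j < d)%nat ->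
     A i j = sumR d (fun k => U i k * s k * V j k)).

(* singular values s_1(A) >= ... >= s_d(A), stored 0-indexed: sing_vals d A 0 = s_1(A) *)
Definition sing_vals (d : nat) (A : Mat) : nat -> R :=
  epsilon (inhabits (fun _ => 0))
    (fun s => exists U V, is_svd d A U s V).

Definition gr (d : nat) (A : Mat) : R := sing_vals d A 0 / sing_vals d A 1.

(* L_m ... L_2 L_1 for a family L indexed from 1 *)
Fixpoint prodM (d : nat) (L : nat -> Mat) (m : nat) : Mat :=
  match m with O => idM | S k => mulM d (L (S k)) (prodM d L k) end.

Definition rho (d : nat) (L : nat -> Mat) (m : nat) : R :=
  opnorm d (prodM d L m) / prodR m (fun k => opnorm d (L (S k))).

Definition rho2 (d : nat) (A B : Mat) : R :=
  opnorm d (mulM d B A) / (opnorm d B * opnorm d A).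

From Stdlib Require Import Reals Lra Lia Psatz ClassicalEpsilon.
From Stdlib Require Morphisms Setoid.
From mathcomp Require all_boot all_order all_algebra all_classical all_reals
  topology normedtype derive Rstruct Rstruct_topology.
Open Scope R_scope.

(* A gap ratio [gr L >= 1/kappa] makes [L] a rank-one map up to relative error
   [kappa]: [L x = s_1 <v, x> u + E x] with [|E| <= kappa s_1], where [v], [u] are the top
   singular vectors (the SVD exists by maximizing [|A x|] on the compact unit ball and deflating
   with Householder reflections).  Consequently [rho(L_K, L_(K+1))] is within [2 kappa] of
   [|<v_(K+1), u_K>|].  By induction along the product, [L_j ... L_1 x] stays of the form
   [t u_j + z] with [|z| <= (2 kappa / eps) |t|], and each step multiplies [|t|] by
   [s_1(L_(j+1)) rho(L_j, L_(j+1))] up to a factor [1 +- 3 kappa / eps^2]; multiplying the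
   [n - 1] factors gives the bounds.  The argument yields the exponent [(6 n - 5) kappa / eps^2]
   and does not need [n >= 36]. *)

#[export] Instance sumR_ext_Proper n :
  Morphisms.Proper (Morphisms.respectful (Morphisms.pointwise_relation nat eq) eq) (sumR n).
Proof. intros f g H; induction n; simpl; [reflexivity | rewrite IHn, H; reflexivity]. Qed.

Lemma sumR_ext n f g : (forall k, (k < n)%nat -> f k = g k) -> sumR n f = sumR n g.
Proof.
  induction n; intros H; simpl; [reflexivity |].
  rewrite IHn by (intros; apply H; lia). rewrite H by lia. reflexivity.
Qed.

Lemma sumR_plus n f g : sumR n (fun k => f k + g k) = sumR n f + sumR n g.
Proof. induction n; simpl; [ring | rewrite IHn; ring]. Qed.

Lemma sumR_minus n f g : sumR n (fun k => f k - g k) = sumR n f - sumR n g.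
Proof. induction n; simpl; [ring | rewrite IHn; ring]. Qed.

Lemma sumR_scal_l n c f : sumR n (fun k => c * f k) = c * sumR n f.
Proof. induction n; simpl; [ring | rewrite IHn; ring]. Qed.

Lemma sumR_scal_r n c f : sumR n (fun k => f k * c) = sumR n f * c.
Proof. induction n; simpl; [ring | rewrite IHn; ring]. Qed.

Lemma sumR_zero n : sumR n (fun _ => 0) = 0.
Proof. induction n; simpl; [ring | rewrite IHn; ring]. Qed.

Lemma sumR_eq0 n f : (forall k, (k < n)%nat -> f k = 0) -> sumR n f = 0.
Proof. intros H. rewrite (sumR_ext n f (fun _ => 0)) by exact H. apply sumR_zero. Qed.

Lemma sumR_swap n m (f : nat -> nat -> R) :
  sumR n (fun i => sumR m (fun j => f i j)) = sumR m (fun j => sumR n (fun i => f i j)).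
Proof.
  induction n; simpl.
  - now rewrite sumR_zero.
  - rewrite IHn, <- sumR_plus. reflexivity.
Qed.

Lemma sumR_S_l n f : sumR (S n) f = f O + sumR n (fun k => f (S k)).
Proof. induction n; simpl in *; [ring | rewrite IHn; ring]. Qed.

Lemma sumR_le n f g : (forall k, (k < n)%nat -> f k <= g k) -> sumR n f <= sumR n g.
Proof.
  induction n; intros H; simpl; [lra |].
  assert (sumR n f <= sumR n g) by (apply IHn; intros; apply H; lia).
  assert (f n <= g n) by (apply H; lia). lra.
Qed.

Lemma sumR_nonneg n f : (forall k, (k < n)%nat -> 0 <= f k) -> 0 <= sumR n f.
Proof. intros H. rewrite <- (sumR_zero n). apply sumR_le. exact H. Qed.

Lemma sumR_term_le n f k :
  (forall j, (j < n)%nat -> 0 <= f j) -> (k < n)%nat -> f k <= sumR n f.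
Proof.
  induction n; intros H Hk; simpl; [lia |].
  assert (0 <= sumR n f) by (apply sumR_nonneg; intros; apply H; lia).
  assert (0 <= f n) by (apply H; lia).
  destruct (PeanoNat.Nat.eq_dec k n) as [-> | Hne]; [lra |].
  assert (f k <= sumR n f) by (apply IHn; [intros; apply H | ]; lia). lra.
Qed.

Lemma sumR_sq_eq0 n x : sumR n (fun i => x i ^ 2) = 0 -> forall i, (i < n)%nat -> x i = 0.
Proof.
  intros H i Hi.
  assert (x i ^ 2 <= 0).
  { rewrite <- H. apply (sumR_term_le n (fun i => x i ^ 2)); [intros; nra | exact Hi]. }
  nra.
Qed.

Lemma prodR_ext m f g : (forall k, (k < m)%nat -> f k = g k) -> prodR m f = prodR m g.
Proof.
  induction m; intros H; simpl; [reflexivity |].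
  rewrite IHm by (intros; apply H; lia). rewrite H by lia. reflexivity.
Qed.

Lemma prodR_pos m f : (forall k, (k < m)%nat -> 0 < f k) -> 0 < prodR m f.
Proof.
  induction m; intros H; simpl; [lra |].
  assert (0 < prodR m f) by (apply IHm; intros; apply H; lia).
  assert (0 < f m) by (apply H; lia). nra.
Qed.

Lemma idM_sym i j : idM i j = idM j i.
Proof. unfold idM. rewrite PeanoNat.Nat.eqb_sym. reflexivity. Qed.

Lemma idM_diag i : idM i i = 1.
Proof. unfold idM. rewrite PeanoNat.Nat.eqb_refl. reflexivity. Qed.

Lemma idM_offdiag i j : i <> j -> idM i j = 0.
Proof. intros H. unfold idM. destruct (PeanoNat.Nat.eqb_spec i j); [congruence | reflexivity]. Qed.

Lemma sumR_idM_r n f k : (k < n)%nat -> sumR n (fun j => f j * idM j k) = f k.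
Proof.
  induction n; intros Hk; simpl; [lia |].
  destruct (PeanoNat.Nat.eq_dec k n) as [-> | Hne].
  - rewrite idM_diag, sumR_eq0; [ring |].
    intros j Hj. rewrite idM_offdiag by lia. ring.
  - rewrite IHn, idM_offdiag by lia. ring.
Qed.

Lemma sumR_idM_l n f k : (k < n)%nat -> sumR n (fun j => idM k j * f j) = f k.
Proof.
  intros Hk. rewrite <- (sumR_idM_r n f k Hk).
  apply sumR_ext. intros j _. rewrite idM_sym. ring.
Qed.

Definition ip d (x y : Vec) : R := sumR d (fun i => x i * y i).
Definition nsq d (x : Vec) : R := sumR d (fun i => x i ^ 2).

Lemma nsq_ip d x : nsq d x = ip d x x.
Proof. apply sumR_ext; intros; ring. Qed.

Lemma nsq_nonneg d x : 0 <= nsq d x.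
Proof. apply sumR_nonneg; intros; nra. Qed.

Lemma nsq_ext d x y : (forall i, (i < d)%nat -> x i = y i) -> nsq d x = nsq d y.
Proof. intros H. apply sumR_ext; intros i Hi. rewrite H by exact Hi. reflexivity. Qed.

Lemma nsq_scal d x a : nsq d (fun i => a * x i) = a ^ 2 * nsq d x.
Proof. unfold nsq. rewrite <- sumR_scal_l. apply sumR_ext; intros; ring. Qed.

Lemma nsq_lincomb d (x y : Vec) a b :
  nsq d (fun i => a * x i + b * y i) = a ^ 2 * nsq d x + 2 * a * b * ip d x y + b ^ 2 * nsq d y.
Proof. unfold nsq, ip. rewrite <- !sumR_scal_l, <- !sumR_plus. apply sumR_ext; intros; ring. Qed.

Lemma ip_ext d v x y : (forall j, (j < d)%nat -> x j = y j) -> ip d v x = ip d v y.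
Proof. intros H. apply sumR_ext; intros j Hj. rewrite H by exact Hj. reflexivity. Qed.

Lemma ip_axpy d v u z t : ip d v (fun i => t * u i + z i) = t * ip d v u + ip d v z.
Proof. unfold ip. rewrite <- sumR_scal_l, <- sumR_plus. apply sumR_ext; intros; ring. Qed.

Lemma ip_scal_r d v x a : ip d v (fun i => a * x i) = a * ip d v x.
Proof. unfold ip. rewrite <- sumR_scal_l. apply sumR_ext; intros; ring. Qed.

Lemma ip_sq_le_unit d v x : nsq d v = 1 -> ip d v x ^ 2 <= nsq d x.
Proof.
  intros Hv. set (c := ip d v x).
  pose proof (nsq_nonneg d (fun i => 1 * x i + (- c) * v i)) as H.
  rewrite nsq_lincomb, Hv in H.
  assert (ip d x v = c) by (unfold c, ip; apply sumR_ext; intros; ring).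
  nra.
Qed.

Lemma vnorm_sqrt d x : vnorm d x = sqrt (nsq d x).
Proof. reflexivity. Qed.

Lemma vnorm_nonneg d x : 0 <= vnorm d x.
Proof. apply sqrt_pos. Qed.

Lemma vnorm_sq d x : vnorm d x ^ 2 = nsq d x.
Proof. rewrite vnorm_sqrt, pow2_sqrt by apply nsq_nonneg. reflexivity. Qed.

Lemma vnorm_unit d x : nsq d x = 1 -> vnorm d x = 1.
Proof. intros H. rewrite vnorm_sqrt, H. apply sqrt_1. Qed.

Lemma vnorm_ext d x y : (forall i, (i < d)%nat -> x i = y i) -> vnorm d x = vnorm d y.
Proof. intros H. rewrite !vnorm_sqrt, (nsq_ext d x y H). reflexivity. Qed.

Lemma vnorm_le_of_nsq d x y a :
  0 <= a -> nsq d x <= a ^ 2 * nsq d y -> vnorm d x <= a * vnorm d y.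
Proof.
  intros Ha H. apply Rsqr_incr_0_var.
  - rewrite !Rsqr_pow2, Rpow_mult_distr, !vnorm_sq. exact H.
  - pose proof (vnorm_nonneg d y). nra.
Qed.

Lemma Rabs_ip_le_unit d v x : nsq d v = 1 -> Rabs (ip d v x) <= vnorm d x.
Proof.
  intros Hv. apply Rsqr_incr_0_var; [| apply vnorm_nonneg].
  rewrite <- Rsqr_abs, !Rsqr_pow2, vnorm_sq. apply ip_sq_le_unit, Hv.
Qed.

Lemma vnorm_axpy_unit d u z t : nsq d u = 1 ->
  Rabs t - vnorm d z <= vnorm d (fun i => t * u i + z i) <= Rabs t + vnorm d z.
Proof.
  intros Hu.
  assert (E : nsq d (fun i => t * u i + z i) = t ^ 2 + 2 * t * ip d u z + nsq d z).
  { rewrite (nsq_ext d _ (fun i => t * u i + 1 * z i)) by (intros; ring).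
    rewrite nsq_lincomb, Hu. ring. }
  pose proof (Rabs_ip_le_unit d u z Hu) as Hip.
  pose proof (vnorm_nonneg d z). pose proof (vnorm_sq d z).
  pose proof (vnorm_nonneg d (fun i => t * u i + z i)).
  pose proof (vnorm_sq d (fun i => t * u i + z i)) as Hy. rewrite E in Hy.
  assert (Rabs t ^ 2 = t ^ 2) by (rewrite <- Rsqr_pow2, <- Rsqr_abs, Rsqr_pow2; reflexivity).
  assert (Rabs (t * ip d u z) <= Rabs t * vnorm d z)
    by (rewrite Rabs_mult; apply Rmult_le_compat_l; [apply Rabs_pos | exact Hip]).
  pose proof (Rabs_pos t). pose proof (Rle_abs (t * ip d u z)).
  pose proof (Rle_abs (- (t * ip d u z))). rewrite Rabs_Ropp in *.
  split; nra.
Qed.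

Lemma applyM_ext d A x y i :
  (forall j, (j < d)%nat -> x j = y j) -> applyM d A x i = applyM d A y i.
Proof. intros H. apply sumR_ext; intros j Hj. rewrite H by exact Hj. reflexivity. Qed.

Lemma applyM_scal d A x a i : applyM d A (fun j => a * x j) i = a * applyM d A x i.
Proof. unfold applyM. rewrite <- sumR_scal_l. apply sumR_ext; intros; ring. Qed.

Lemma applyM_lincomb d A (x y : Vec) a b i :
  applyM d A (fun j => a * x j + b * y j) i = a * applyM d A x i + b * applyM d A y i.
Proof. unfold applyM. rewrite <- !sumR_scal_l, <- sumR_plus. apply sumR_ext; intros; ring. Qed.

Lemma applyM_mulM d X Y z i : applyM d (mulM d X Y) z i = applyM d X (applyM d Y z) i.
Proof.
  unfold applyM, mulM.
  setoid_rewrite <- sumR_scal_l. setoid_rewrite <- sumR_scal_r.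
  rewrite sumR_swap. apply sumR_ext; intros; apply sumR_ext; intros; ring.
Qed.

Lemma applyM_idM d x i : (i < d)%nat -> applyM d idM x i = x i.
Proof. apply sumR_idM_l. Qed.

Definition trM (A : Mat) : Mat := fun i j => A j i.
Definition col (A : Mat) (j : nat) : Vec := fun i => A i j.
Definition symM (A : Mat) : Prop := forall i j, A i j = A j i.

Lemma sumR_sq n f : sumR n f ^ 2 = sumR n (fun k => sumR n (fun l => f k * f l)).
Proof.
  transitivity (sumR n f * sumR n f); [ring |].
  rewrite <- sumR_scal_r. apply sumR_ext; intros k _. rewrite <- sumR_scal_l. reflexivity.
Qed.

Lemma nsq_applyM_orthogonal d W w : orthogonal d W -> nsq d (applyM d W w) = nsq d w.
Proof.
  intros HW. unfold nsq, applyM. setoid_rewrite sumR_sq.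
  transitivity (sumR d (fun k => sumR d (fun l => w k * w l * sumR d (fun i => W i k * W i l)))).
  - rewrite sumR_swap. apply sumR_ext; intros k _. rewrite sumR_swap.
    apply sumR_ext; intros l _. rewrite <- sumR_scal_l. apply sumR_ext; intros; ring.
  - apply sumR_ext; intros k Hk.
    rewrite (sumR_ext d _ (fun l => w k * w l * idM l k))
      by (intros l Hl; rewrite (HW k l Hk Hl), idM_sym; reflexivity).
    rewrite (sumR_idM_r d (fun l => w k * w l) k Hk). ring.
Qed.

Lemma bessel d V x :
  orthogonal d V -> sumR d (fun k => ip d (col V k) x ^ 2) <= nsq d x.
Proof.
  intros HV. set (c := fun k => ip d (col V k) x).
  pose proof (nsq_nonneg d (fun j => 1 * x j + (-1) * applyM d V c j)) as H.
  rewrite nsq_lincomb, nsq_applyM_orthogonal in H by exact HV.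
  assert (Hxc : ip d x (applyM d V c) = nsq d c).
  { unfold ip, applyM, nsq. setoid_rewrite <- sumR_scal_l. rewrite sumR_swap.
    apply sumR_ext; intros k _. transitivity (c k * c k); [| ring].
    unfold c at 2, ip, col; cbv beta. rewrite <- sumR_scal_r. apply sumR_ext; intros; ring. }
  change (nsq d c <= nsq d x). lra.
Qed.

Lemma orthogonal_mulM d X Y : orthogonal d X -> orthogonal d Y -> orthogonal d (mulM d X Y).
Proof.
  intros HX HY i j Hi Hj. unfold mulM.
  transitivity (sumR d (fun l => sumR d (fun m => Y l i * Y m j * sumR d (fun k => X k l * X k m)))).
  - setoid_rewrite <- sumR_scal_r. setoid_rewrite <- sumR_scal_l.
    rewrite sumR_swap. apply sumR_ext; intros l _. rewrite sumR_swap.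
    apply sumR_ext; intros m _. apply sumR_ext; intros; ring.
  - rewrite <- (HY i j Hi Hj). apply sumR_ext; intros l Hl.
    rewrite (sumR_ext d _ (fun m => Y l i * Y m j * idM m l))
      by (intros m Hm; rewrite (HX l m Hl Hm), idM_sym; reflexivity).
    apply (sumR_idM_r d (fun m => Y l i * Y m j) l Hl).
Qed.

Lemma orthogonal_sym_rows d H : symM H -> orthogonal d H ->
  forall i k, (i < d)%nat -> (k < d)%nat -> sumR d (fun p => H i p * H k p) = idM i k.
Proof.
  intros Hs Ho i k Hi Hk. rewrite <- (Ho i k Hi Hk).
  apply sumR_ext; intros. rewrite (Hs i), (Hs k). reflexivity.
Qed.

Lemma orthogonal_trM_sym d H : symM H -> orthogonal d H -> orthogonal d (trM H).
Proof. intros Hs Ho i j Hi Hj. exact (orthogonal_sym_rows d H Hs Ho i j Hi Hj). Qed.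

Lemma sumR_orthogonal_sym_l d H X i : symM H -> orthogonal d H -> (i < d)%nat ->
  sumR d (fun p => H i p * sumR d (fun k => H k p * X k)) = X i.
Proof.
  intros Hs Ho Hi.
  transitivity (sumR d (fun k => X k * sumR d (fun p => H i p * H k p))).
  - setoid_rewrite <- sumR_scal_l. rewrite sumR_swap.
    apply sumR_ext; intros; apply sumR_ext; intros; ring.
  - rewrite <- (sumR_idM_r d X i Hi). apply sumR_ext; intros k Hk.
    rewrite (orthogonal_sym_rows d H Hs Ho i k Hi Hk), idM_sym. reflexivity.
Qed.

Lemma sumR_orthogonal_sym_r d H X j : symM H -> orthogonal d H -> (j < d)%nat ->
  sumR d (fun q => sumR d (fun l => X l * H l q) * H j q) = X j.
Proof.
  intros Hs Ho Hj. rewrite <- (sumR_orthogonal_sym_l d H X j Hs Ho Hj).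
  apply sumR_ext; intros q _. rewrite Rmult_comm. f_equal. apply sumR_ext; intros; ring.
Qed.

Lemma nsq_e0 d : (1 <= d)%nat -> nsq d (fun i => idM i O) = 1.
Proof.
  intros Hd. unfold nsq. rewrite <- (idM_diag O), <- (sumR_idM_r d (fun i => idM i O) O) by lia.
  apply sumR_ext; intros; ring.
Qed.

(* The reflection [I - 2 w w^T / |w|^2] with [w = e_0 - v] maps [e_0] to [v]. *)
Lemma householder d v : (1 <= d)%nat -> nsq d v = 1 ->
  exists H, symM H /\ orthogonal d H /\ forall i, (i < d)%nat -> H i O = v i.
Proof.
  intros Hd Hv.
  set (w := fun i => idM i O - v i).
  assert (Hnw : nsq d w = 2 - 2 * v O).
  { unfold w. rewrite (nsq_ext d _ (fun i => 1 * (fun i => idM i O) i + (-1) * v i))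
      by (intros; ring).
    rewrite nsq_lincomb, nsq_e0, Hv by exact Hd. unfold ip.
    rewrite (sumR_ext d _ (fun i => idM O i * v i)) by (intros; rewrite idM_sym; reflexivity).
    rewrite sumR_idM_l by lia. ring. }
  destruct (Req_dec (nsq d w) 0) as [H0 | H0].
  - exists idM. split; [intros i j; apply idM_sym |]. split.
    + intros i j Hi Hj. rewrite (sumR_idM_r d (fun k => idM k i) j Hj). apply idM_sym.
    + intros i Hi. pose proof (sumR_sq_eq0 d w H0 i Hi). unfold w in *. lra.
  - set (nw := nsq d w) in *.
    exists (fun i j => idM i j - 2 * w i * w j / nw). split; [| split].
    + intros i j. rewrite idM_sym. field. exact H0.
    + intros i j Hi Hj.
      transitivity (sumR d (fun k => idM k i * idM k j) - (2 * w j / nw) * sumR d (fun k => idM i k * w k)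
         - (2 * w i / nw) * sumR d (fun k => idM j k * w k)
         + (4 * w i * w j / nw ^ 2) * sumR d (fun k => w k ^ 2)).
      * rewrite <- !sumR_scal_l, <- !sumR_minus, <- sumR_plus. apply sumR_ext; intros k Hk.
        rewrite (idM_sym k i), (idM_sym k j). field. exact H0.
      * rewrite (sumR_idM_l d w i Hi), (sumR_idM_l d w j Hj), (sumR_idM_r d (fun k => idM k i) j Hj).
        fold (nsq d w). fold nw. rewrite (idM_sym j i). field. exact H0.
    + intros i Hi. assert (Hw0 : w O = 1 - v O) by (unfold w; rewrite idM_diag; ring).
      assert (1 - v O <> 0) by (intro; apply H0; rewrite Hnw; lra).
      rewrite Hw0, Hnw. unfold w. field. lra.
Qed.

Definition ext1 (M : Mat) : Mat := fun i j =>
  match i, j with O, O => 1 | O, S _ | S _, O => 0 | S i', S j' => M i' j' end.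

Lemma orthogonal_ext1 d M : orthogonal d M -> orthogonal (S d) (ext1 M).
Proof.
  intros HM i j Hi Hj. rewrite sumR_S_l.
  destruct i as [| i]; destruct j as [| j]; simpl;
    [| | | rewrite (HM i j) by lia; unfold idM; simpl; ring];
    rewrite sumR_eq0 by (intros; simpl; ring); unfold idM; simpl; ring.
Qed.

Module UnitBallMax.
Import all_boot all_order all_algebra all_classical all_reals
  topology normedtype derive Rstruct Rstruct_topology.
Import Order.TTheory GRing.Theory Num.Theory numFieldNormedType.Exports.
Local Open Scope classical_set_scope.
Local Open Scope ring_scope.

Lemma continuous_sumR n (F : nat -> 'rV[R]_n -> R) m :
  (forall k, continuous (F k)) -> continuous (fun r => sumR m (fun k => F k r)).
Proof.
move=> hF; elim: m => [|m IH] /=; first exact: cst_continuous.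
by move=> x; exact: (@continuousD R R^o _ _ _ x (IH x) (hF m x)).
Qed.

Lemma continuous_Rmult n (f g : 'rV[R]_n -> R) :
  continuous f -> continuous g -> continuous (fun r => Rmult (f r) (g r)).
Proof. by move=> hf hg x; exact: (@continuousM R _ f g x (hf x) (hg x)). Qed.

Lemma continuous_pow2 n (f : 'rV[R]_n -> R) :
  continuous f -> continuous (fun r => pow (f r) 2).
Proof.
move=> hf; apply: continuous_Rmult => //; apply: continuous_Rmult => //.
exact: cst_continuous.
Qed.

Lemma continuous_max_on_bounded_sublevel n (q g : 'rV[R]_n -> R) :
  continuous q -> continuous g ->
  (forall r, Rle (g r) 1 -> forall i, Rle (-1) (r ord0 i) /\ Rle (r ord0 i) 1) ->
  forall r0, Rle (g r0) 1 ->
  exists c, Rle (g c) 1 /\ forall r, Rle (g r) 1 -> Rle (q r) (q c).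
Proof.
move=> qc gc gbox r0 g0.
pose B := [set r | (g r <= 1)%R].
have Bcl : closed B by exact: (proj1 (continuous_closedP g) gc _ (@closed_le _ 1)).
have Kco : compact [set v : 'rV[R]_n | forall i, `[-1, 1]%classic (v ord0 i)].
  exact: (@rV_compact R n (fun=> `[-1, 1]%classic) (fun=> @segment_compact _ _ _)).
have Bco : compact B.
  apply: (subclosed_compact Bcl Kco) => r /= /RleP /gbox hr i.
  have [h1 h2] := hr i.
  by rewrite /= in_itv /=; apply/andP; split; apply/RleP.
have B0 : B !=set0 by exists r0; apply/RleP.
have [c cB cmax] := EVT_max_rV B0 Bco (continuous_subspaceT qc).
exists c; split; first by move: cB; rewrite inE => /RleP.
by move=> r /RleP rB; apply/RleP; apply: cmax; rewrite inE.
Qed.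

(* Vectors of length [m.+1] are read off row vectors; indices [>= m.+1] are clamped by [inord]. *)
Definition of_row m (r : 'rV[R]_m.+1) : Vec := fun j => r ord0 (inord j).
Arguments of_row {m} r j.
Definition to_row m (x : Vec) : 'rV[R]_m.+1 := \row_(i < m.+1) x (nat_of_ord i).

Lemma continuous_of_row m j : continuous (fun r : 'rV[R]_m.+1 => of_row r j).
Proof. exact: (@coord_continuous R 1 m.+1 ord0 (inord j)). Qed.

Lemma of_rowK m (x : Vec) j : (j < m.+1)%coq_nat -> of_row (to_row m x) j = x j.
Proof. by move=> Hj; rewrite /of_row /to_row mxE inordK //; exact/ssrnat.ltP. Qed.

Lemma exists_max_on_unit_ball d A : exists c, Rle (nsq d c) 1 /\
  forall x, Rle (nsq d x) 1 -> Rle (nsq d (applyM d A x)) (nsq d (applyM d A c)).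
Proof.
case: d => [|m].
  by exists (fun _ => R0); split=> [|x _]; rewrite /nsq /=; lra.
pose q (r : 'rV[R]_m.+1) := nsq m.+1 (applyM m.+1 A (of_row r)).
pose g (r : 'rV[R]_m.+1) := nsq m.+1 (of_row r).
have qc : continuous q.
  apply: continuous_sumR => i; apply: continuous_pow2; apply: continuous_sumR => j.
  by apply: continuous_Rmult; [exact: cst_continuous | exact: continuous_of_row].
have gc : continuous g.
  by apply: continuous_sumR => i; apply: continuous_pow2; exact: continuous_of_row.
have gbox : forall r, Rle (g r) 1 -> forall i, Rle (-1) (r ord0 i) /\ Rle (r ord0 i) 1.
  move=> r Hr i.
  have Hi : Peano.lt (nat_of_ord i) m.+1 by apply/ssrnat.ltP; exact: ltn_ord.
  have := @sumR_term_le m.+1 (fun k => pow (of_row r k) 2) i (fun j _ => pow2_ge_0 _) Hi.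
  rewrite /of_row inord_val => H1; rewrite /g /nsq /of_row in Hr.
  split; nra.
have g0 : Rle (g (to_row m (fun _ => R0))) 1.
  rewrite /g /nsq sumR_eq0; first lra.
  by move=> k Hk; rewrite of_rowK //=; ring.
have [c [Hc Hmax]] := @continuous_max_on_bounded_sublevel _ q g qc gc gbox _ g0.
exists (of_row c); split=> // x Hx.
have Hr : forall j, (j < m.+1)%coq_nat -> of_row (to_row m x) j = x j by move=> j; exact: of_rowK.
have Hq : q (to_row m x) = nsq m.+1 (applyM m.+1 A x).
  by apply: nsq_ext => i _; exact: applyM_ext.
have Hg : g (to_row m x) = nsq m.+1 x by exact: nsq_ext.
by have := Hmax (to_row m x); rewrite Hq Hg; apply.
Qed.

End UnitBallMax.

Lemma linear_le_quadratic_eq0 b K : (forall t, 2 * t * b <= t ^ 2 * K) -> b = 0.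
Proof.
  intros H. pose proof (H 1) as H1. pose proof (H (-1)) as H2.
  assert (HK : 0 <= K) by lra.
  set (t := b / (K + 1)).
  assert (Hb : b = t * (K + 1)) by (unfold t; field; lra).
  pose proof (H t) as Ht. rewrite Hb in Ht.
  assert (t ^ 2 * (K + 2) <= 0) by nra.
  assert (Ht0 : t = 0) by nra.
  rewrite Hb, Ht0. ring.
Qed.

Lemma nsq_applyM_scal d A x a :
  nsq d (applyM d A (fun j => a * x j)) = a ^ 2 * nsq d (applyM d A x).
Proof. rewrite <- nsq_scal. apply nsq_ext; intros; apply applyM_scal. Qed.

Lemma applyM_eq0 d A x : (forall j, (j < d)%nat -> x j = 0) -> forall i, applyM d A x i = 0.
Proof. intros H i. apply sumR_eq0; intros j Hj. rewrite H by exact Hj. ring. Qed.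

Lemma nsq_applyM_le_of_unit_ball d A M :
  (forall x, nsq d x <= 1 -> nsq d (applyM d A x) <= M) ->
  forall x, nsq d (applyM d A x) <= M * nsq d x.
Proof.
  intros HM x.
  destruct (Req_dec (nsq d x) 0) as [H0 | H0].
  - rewrite H0, Rmult_0_r. unfold nsq. rewrite sumR_eq0; [lra |].
    intros i _. rewrite (applyM_eq0 d A x (sumR_sq_eq0 d x H0)). ring.
  - pose proof (nsq_nonneg d x).
    set (r := sqrt (nsq d x)).
    assert (Hr : 0 < r) by (apply sqrt_lt_R0; lra).
    assert (Hr2 : r ^ 2 = nsq d x) by (unfold r; rewrite pow2_sqrt; lra).
    pose proof (HM (fun j => / r * x j)) as H1.
    rewrite nsq_applyM_scal, nsq_scal, <- Hr2 in H1.
    specialize (H1 ltac:(right; field; lra)).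
    rewrite <- Hr2. apply (Rmult_le_reg_l ((/ r) ^ 2)); [apply pow_lt, Rinv_0_lt_compat, Hr |].
    replace ((/ r) ^ 2 * (M * r ^ 2)) with M by (field; lra). exact H1.
Qed.

Lemma exists_unit_maximizer d A : (1 <= d)%nat -> exists v, nsq d v = 1 /\
  forall x, nsq d (applyM d A x) <= nsq d (applyM d A v) * nsq d x.
Proof.
  intros Hd.
  destruct (UnitBallMax.exists_max_on_unit_ball d A) as [c [Hc Hmax]].
  set (M := nsq d (applyM d A c)).
  pose proof (nsq_applyM_le_of_unit_ball d A M Hmax) as Hall.
  assert (Hv : exists v, nsq d v = 1 /\ M <= nsq d (applyM d A v)).
  { destruct (Req_dec (nsq d c) 0) as [H0 | H0].
    - exists (fun i => idM i O). split; [apply nsq_e0, Hd |].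
      pose proof (Hall c). rewrite H0 in H. pose proof (nsq_nonneg d (applyM d A (fun i => idM i O))).
      unfold M. lra.
    - pose proof (nsq_nonneg d c).
      set (r := sqrt (nsq d c)).
      assert (Hr : 0 < r) by (apply sqrt_lt_R0; lra).
      assert (Hr2 : r ^ 2 = nsq d c) by (unfold r; rewrite pow2_sqrt; lra).
      exists (fun j => / r * c j). rewrite nsq_scal, nsq_applyM_scal, <- Hr2.
      split; [field; lra |].
      assert (HM : 0 <= M) by apply nsq_nonneg.
      assert (1 <= (/ r) ^ 2).
      { rewrite pow_inv. rewrite <- Rinv_1. apply Rinv_le_contravar; [apply pow_lt |]; lra. }
      fold M. nra. }
  destruct Hv as [v [Hv HMv]]. exists v. split; [exact Hv |].
  intros x. pose proof (Hall x). pose proof (nsq_nonneg d x). nra.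
Qed.

(* First variation of [|A x|^2] at a maximizer on the unit sphere. *)
Lemma ip_applyM_maximizer_orth d A v y : nsq d v = 1 ->
  (forall x, nsq d (applyM d A x) <= nsq d (applyM d A v) * nsq d x) ->
  ip d v y = 0 -> ip d (applyM d A v) (applyM d A y) = 0.
Proof.
  intros Hv Hmax Hy. apply (linear_le_quadratic_eq0 _
    (nsq d (applyM d A v) * nsq d y - nsq d (applyM d A y))).
  intros t. pose proof (Hmax (fun i => 1 * v i + t * y i)) as H.
  rewrite (nsq_ext d _ (fun i => 1 * applyM d A v i + t * applyM d A y i)) in H
    by (intros; apply applyM_lincomb).
  rewrite !nsq_lincomb, Hv, Hy in H. nra.
Qed.

Lemma top_singular_pair d A : (1 <= d)%nat ->
  exists v u s, nsq d v = 1 /\ nsq d u = 1 /\ 0 <= s /\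
    (forall i, (i < d)%nat -> applyM d A v i = s * u i) /\
    (forall x, nsq d (applyM d A x) <= s ^ 2 * nsq d x) /\
    (forall y, ip d v y = 0 -> ip d u (applyM d A y) = 0).
Proof.
  intros Hd. destruct (exists_unit_maximizer d A Hd) as [v [Hv Hmax]].
  set (s := sqrt (nsq d (applyM d A v))).
  assert (Hs2 : s ^ 2 = nsq d (applyM d A v)) by (unfold s; rewrite pow2_sqrt by apply nsq_nonneg; reflexivity).
  assert (Hs0 : 0 <= s) by apply sqrt_pos.
  destruct (Req_dec s 0) as [Hs | Hs].
  - assert (HA0 : forall y i, (i < d)%nat -> applyM d A y i = 0).
    { intros y. apply sumR_sq_eq0. pose proof (Hmax y). pose proof (nsq_nonneg d y).
      pose proof (nsq_nonneg d (applyM d A y)). fold (nsq d (applyM d A y)).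
      rewrite <- Hs2, Hs in H. nra. }
    exists v, (fun i => idM i O), s. repeat split; auto using nsq_e0.
    + intros i Hi. rewrite HA0, Hs by exact Hi. ring.
    + intros x. rewrite Hs2. apply Hmax.
    + intros y _. apply sumR_eq0; intros i Hi. rewrite HA0 by exact Hi. ring.
  - exists v, (fun i => / s * applyM d A v i), s. repeat split; auto.
    + rewrite nsq_scal, <- Hs2. field. exact Hs.
    + intros i _. field. exact Hs.
    + intros x. rewrite Hs2. apply Hmax.
    + intros y Hy. unfold ip. rewrite (sumR_ext d _ (fun i => / s * (applyM d A v i * applyM d A (y) i)))
        by (intros; ring).
      rewrite sumR_scal_l. fold (ip d (applyM d A v) (applyM d A y)).
      rewrite (ip_applyM_maximizer_orth d A v y Hv Hmax Hy). ring.
Qed.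

Lemma nsq_col_orthogonal d V j : orthogonal d V -> (j < d)%nat -> nsq d (col V j) = 1.
Proof. intros HV Hj. rewrite nsq_ip, <- (idM_diag j). exact (HV j j Hj Hj). Qed.

Lemma applyM_svd d A U s V x i : is_svd d A U s V -> (i < d)%nat ->
  applyM d A x i = sumR d (fun k => U i k * (s k * ip d (col V k) x)).
Proof.
  intros (_ & _ & _ & _ & HA) Hi. unfold applyM.
  rewrite (sumR_ext d _ (fun j => sumR d (fun k => U i k * s k * V j k) * x j))
    by (intros j Hj; rewrite HA by assumption; reflexivity).
  setoid_rewrite <- sumR_scal_r. rewrite sumR_swap. apply sumR_ext; intros k _.
  unfold ip, col. rewrite <- !sumR_scal_l. apply sumR_ext; intros; ring.
Qed.

Lemma applyM_svd_col0 d A U s V i : (1 <= d)%nat -> is_svd d A U s V -> (i < d)%nat ->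
  applyM d A (col V O) i = s O * U i O.
Proof.
  intros Hd Hsvd Hi. rewrite (applyM_svd d A U s V _ i Hsvd Hi).
  destruct Hsvd as (_ & HV & _).
  rewrite (sumR_ext d _ (fun k => U i k * s k * idM k O))
    by (intros k Hk; unfold ip, col; cbv beta; rewrite (HV k O Hk ltac:(lia)); ring).
  rewrite (sumR_idM_r d (fun k => U i k * s k) O) by lia. ring.
Qed.

Lemma svd_top_le d B U s V c : (1 <= d)%nat -> 0 <= c -> is_svd d B U s V ->
  (forall y, nsq d (applyM d B y) <= c ^ 2 * nsq d y) -> s O <= c.
Proof.
  intros Hd Hc Hsvd HB. pose proof Hsvd as (HU & HV & Hs0 & _).
  pose proof (HB (col V O)) as H.
  rewrite (nsq_ext d _ (fun i => s O * col U O i)) in H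
    by (intros i Hi; apply (applyM_svd_col0 d B U s V i Hd Hsvd Hi)).
  rewrite nsq_scal, !nsq_col_orthogonal in H by (assumption || lia).
  pose proof (Hs0 O ltac:(lia)). nra.
Qed.

Lemma conj_entry d H A K p q :
  mulM d (mulM d (trM H) A) K p q = ip d (col H p) (applyM d A (col K q)).
Proof.
  unfold mulM, trM, applyM, ip, col.
  setoid_rewrite <- sumR_scal_r. rewrite sumR_swap.
  apply sumR_ext; intros k _. rewrite <- sumR_scal_l. apply sumR_ext; intros; ring.
Qed.

Lemma is_svd_conj d A H K U s V :
  symM H -> orthogonal d H -> symM K -> orthogonal d K ->
  is_svd d (mulM d (mulM d (trM H) A) K) U s V -> is_svd d A (mulM d H U) s (mulM d K V).
Proof.
  intros HHs HHo HKs HKo (HU & HV & Hs0 & Hsm & HB).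
  repeat split; auto using orthogonal_mulM.
  intros i j Hi Hj. set (B := mulM d (mulM d (trM H) A) K) in HB.
  assert (HA : A i j = sumR d (fun p => H i p * sumR d (fun q => B p q * K j q))).
  { unfold B. rewrite <- (sumR_orthogonal_sym_l d H (fun k => A k j) i) by assumption.
    apply sumR_ext; intros p _. f_equal. unfold mulM at 1.
    rewrite (sumR_orthogonal_sym_r d K (fun l => mulM d (trM H) A p l) j) by assumption.
    reflexivity. }
  rewrite HA. unfold mulM.
  transitivity (sumR d (fun p => sumR d (fun k => sumR d (fun q =>
    H i p * U p k * s k * (K j q * V q k))))).
  - apply sumR_ext; intros p Hp. rewrite <- sumR_scal_l.
    rewrite (sumR_ext d _ (fun q => sumR d (fun k => H i p * U p k * s k * (K j q * V q k)))).
    + apply sumR_swap.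
    + intros q Hq. rewrite HB by assumption. rewrite <- sumR_scal_r, <- sumR_scal_l.
      apply sumR_ext; intros; ring.
  - rewrite sumR_swap. apply sumR_ext; intros k _.
    rewrite <- sumR_scal_r, <- sumR_scal_r. apply sumR_ext; intros p _.
    rewrite <- sumR_scal_l. apply sumR_ext; intros; ring.
Qed.

Definition cons0 (y : Vec) : Vec := fun j => match j with O => 0 | S j' => y j' end.

Lemma nsq_cons0 d y : nsq (S d) (cons0 y) = nsq d y.
Proof. unfold nsq. rewrite sumR_S_l. simpl. ring. Qed.

Lemma nsq_applyM_corner_le d B y :
  nsq d (applyM d (fun i j => B (S i) (S j)) y) <= nsq (S d) (applyM (S d) B (cons0 y)).
Proof.
  unfold nsq at 2. rewrite sumR_S_l.
  rewrite (sumR_ext d _ (fun i => applyM d (fun i j => B (S i) (S j)) y i ^ 2)).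
  - pose proof (pow2_ge_0 (applyM (S d) B (cons0 y) O)). unfold nsq. lra.
  - intros i _. unfold applyM. rewrite sumR_S_l. simpl. rewrite Rmult_0_r, Rplus_0_l. reflexivity.
Qed.

Definition cons_sv (s0 : R) (s : nat -> R) : nat -> R :=
  fun k => match k with O => s0 | S k' => s k' end.

Lemma is_svd_block d B s0 U s V : 0 <= s0 ->
  (forall i, (i < S d)%nat -> B i O = s0 * idM i O) ->
  (forall j, (0 < j < S d)%nat -> B O j = 0) ->
  ((1 <= d)%nat -> s O <= s0) ->
  is_svd d (fun i j => B (S i) (S j)) U s V ->
  is_svd (S d) B (ext1 U) (cons_sv s0 s) (ext1 V).
Proof.
  intros Hs0 Hcol Hrow Htop (HU & HV & Hsnn & Hsm & HB').
  split; [apply orthogonal_ext1, HU |]. split; [apply orthogonal_ext1, HV |].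
  split; [intros [| k] Hk; simpl; [exact Hs0 | apply Hsnn; lia] |].
  split; [intros [| k] Hk; simpl; [apply Htop | apply Hsm]; lia |].
  intros [| p] [| q] Hp Hq; rewrite sumR_S_l; simpl.
  - rewrite Hcol, idM_diag, sumR_eq0 by (intros; simpl; ring || lia). ring.
  - rewrite Hrow, sumR_eq0 by (intros; simpl; ring || lia). ring.
  - rewrite Hcol, idM_offdiag, sumR_eq0 by (intros; simpl; ring || lia). ring.
  - rewrite HB' by lia. ring_simplify. apply sumR_ext; intros; simpl; ring.
Qed.

Theorem svd_exists d A : exists U s V, is_svd d A U s V.
Proof.
  revert A; induction d as [| d IH]; intros A.
  { exists idM, (fun _ => 0), idM.
    repeat split; unfold orthogonal; intros; exfalso; lia. }
  destruct (top_singular_pair (S d) A) as (v & u & s0 & Hv & Hu & Hs0 & HAv & Hgain & Hperp);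
    [lia |].
  destruct (householder (S d) v ltac:(lia) Hv) as (K & HKs & HKo & HK0).
  destruct (householder (S d) u ltac:(lia) Hu) as (H & HHs & HHo & HH0).
  set (B := mulM (S d) (mulM (S d) (trM H) A) K).
  assert (HAK0 : forall i, applyM (S d) A (col K O) i = applyM (S d) A v i)
    by (intros i; apply applyM_ext, HK0).
  assert (Hcol : forall i, (i < S d)%nat -> B i O = s0 * idM i O).
  { intros i Hi. unfold B. rewrite conj_entry.
    rewrite (ip_ext (S d) _ _ (fun k => s0 * col H O k)), ip_scal_r by
      (intros k Hk; rewrite HAK0, HAv, <- HH0 by exact Hk; reflexivity).
    f_equal. exact (HHo i O Hi ltac:(lia)). }
  assert (Hrow : forall j, (0 < j < S d)%nat -> B O j = 0).
  { intros j Hj. unfold B. rewrite conj_entry.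
    transitivity (ip (S d) u (applyM (S d) A (col K j)));
      [apply sumR_ext; intros k Hk; unfold col; rewrite HH0 by exact Hk; reflexivity |].
    apply Hperp. transitivity (ip (S d) (col K O) (col K j));
      [apply sumR_ext; intros k Hk; unfold col; rewrite HK0 by exact Hk; reflexivity |].
    rewrite <- (idM_offdiag O j) by lia. exact (HKo O j ltac:(lia) ltac:(lia)). }
  set (B' := fun i j => B (S i) (S j)).
  assert (Hcorner : forall y, nsq d (applyM d B' y) <= s0 ^ 2 * nsq d y).
  { intros y. eapply Rle_trans; [apply nsq_applyM_corner_le |].
    unfold B. rewrite (nsq_ext (S d) _ (applyM (S d) (trM H) (applyM (S d) A (applyM (S d) K (cons0 y)))))
      by (intros; rewrite !applyM_mulM; reflexivity).
    rewrite nsq_applyM_orthogonal by (apply orthogonal_trM_sym; assumption).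
    rewrite <- (nsq_cons0 d y), <- (nsq_applyM_orthogonal (S d) K (cons0 y) HKo). apply Hgain. }
  destruct (IH B') as (U & s & V & Hsvd).
  exists (mulM (S d) H (ext1 U)), (cons_sv s0 s), (mulM (S d) K (ext1 V)).
  apply is_svd_conj; try assumption.
  apply is_svd_block; try assumption.
  intros Hd. apply (svd_top_le d B' U s V s0 Hd Hs0 Hsvd Hcorner).
Qed.

Lemma vnorm_eq1_nsq d x : vnorm d x = 1 <-> nsq d x = 1.
Proof.
  split; intros H; [rewrite <- vnorm_sq, H; ring | apply vnorm_unit, H].
Qed.

Lemma opnorm_is_lub d A M : (1 <= d)%nat ->
  (forall x, nsq d x = 1 -> vnorm d (applyM d A x) <= M) ->
  is_lub (fun r => exists x, vnorm d x = 1 /\ r = vnorm d (applyM d A x)) (opnorm d A).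
Proof.
  intros Hd HM. unfold opnorm. apply epsilon_spec.
  destruct (completeness (fun r => exists x, vnorm d x = 1 /\ r = vnorm d (applyM d A x)))
    as [m Hm]; [| | exists m; exact Hm].
  - exists M. intros r (x & Hx & ->). apply HM, vnorm_eq1_nsq, Hx.
  - exists (vnorm d (applyM d A (fun i => idM i O))), (fun i => idM i O).
    split; [apply vnorm_eq1_nsq, nsq_e0, Hd | reflexivity].
Qed.

Lemma opnorm_le d A M : (1 <= d)%nat ->
  (forall x, nsq d x = 1 -> vnorm d (applyM d A x) <= M) -> opnorm d A <= M.
Proof.
  intros Hd HM. apply (opnorm_is_lub d A M Hd HM).
  intros r (x & Hx & ->). apply HM, vnorm_eq1_nsq, Hx.
Qed.

Lemma vnorm_applyM_le_opnorm d A M x : (1 <= d)%nat ->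
  (forall x, nsq d x = 1 -> vnorm d (applyM d A x) <= M) ->
  nsq d x = 1 -> vnorm d (applyM d A x) <= opnorm d A.
Proof.
  intros Hd HM Hx. apply (opnorm_is_lub d A M Hd HM).
  exists x. split; [apply vnorm_eq1_nsq, Hx | reflexivity].
Qed.

Lemma svd_antitone d A U s V a b : is_svd d A U s V ->
  (a <= b)%nat -> (b < d)%nat -> s b <= s a.
Proof.
  intros (_ & _ & _ & Hs & _) Hab. induction b as [| b IH]; intros Hb.
  - replace a with O by lia. lra.
  - destruct (PeanoNat.Nat.eq_dec a (S b)) as [-> | Hne]; [lra |].
    pose proof (Hs b Hb). pose proof (IH ltac:(lia) ltac:(lia)). lra.
Qed.

Lemma nsq_orthogonal_diag_le d U V f c x : orthogonal d U -> orthogonal d V ->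
  (forall k, (k < d)%nat -> f k ^ 2 <= c ^ 2) ->
  nsq d (fun i => sumR d (fun k => U i k * (f k * ip d (col V k) x))) <= c ^ 2 * nsq d x.
Proof.
  intros HU HV Hf.
  change (nsq d (applyM d U (fun k => f k * ip d (col V k) x)) <= c ^ 2 * nsq d x).
  rewrite nsq_applyM_orthogonal by exact HU.
  eapply Rle_trans; [| apply Rmult_le_compat_l; [apply pow2_ge_0 | apply (bessel d V x HV)]].
  rewrite <- sumR_scal_l. apply sumR_le. intros k Hk.
  rewrite Rpow_mult_distr. apply Rmult_le_compat_r; [apply pow2_ge_0 | apply Hf, Hk].
Qed.

Lemma nsq_applyM_svd_le d A U s V x : (1 <= d)%nat -> is_svd d A U s V ->
  nsq d (applyM d A x) <= s O ^ 2 * nsq d x.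
Proof.
  intros Hd Hsvd. pose proof Hsvd as (HU & HV & Hs0 & _).
  rewrite (nsq_ext d _ _ (fun i Hi => applyM_svd d A U s V x i Hsvd Hi)).
  apply nsq_orthogonal_diag_le; [exact HU | exact HV |].
  intros k Hk. pose proof (svd_antitone d A U s V O k Hsvd ltac:(lia) Hk).
  pose proof (Hs0 k Hk). apply pow_incr. lra.
Qed.

Lemma nsq_svd_rank_one_error d A U s V x : (2 <= d)%nat -> is_svd d A U s V ->
  nsq d (fun i => applyM d A x i - s O * ip d (col V O) x * col U O i)
    <= s 1%nat ^ 2 * nsq d x.
Proof.
  intros Hd Hsvd. pose proof Hsvd as (HU & HV & Hs0 & _).
  rewrite (nsq_ext d _ (fun i => sumR d (fun k =>
    U i k * ((s k - s O * idM k O) * ip d (col V k) x)))).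
  - apply nsq_orthogonal_diag_le; [exact HU | exact HV |].
    intros [| k] Hk.
    + rewrite idM_diag. replace (s O - s O * 1) with 0 by ring. pose proof (Hs0 1%nat ltac:(lia)).
      simpl. nra.
    + rewrite idM_offdiag by lia. pose proof (svd_antitone d A U s V 1 (S k) Hsvd ltac:(lia) Hk).
      pose proof (Hs0 (S k) Hk). apply pow_incr. lra.
  - intros i Hi. rewrite (applyM_svd d A U s V x i Hsvd Hi).
    transitivity (sumR d (fun k => U i k * (s k * ip d (col V k) x))
      - sumR d (fun k => idM O k * (U i k * (s O * ip d (col V k) x)))).
    + rewrite sumR_idM_l by lia. change (col U O i) with (U i O). ring.
    + rewrite <- sumR_minus. apply sumR_ext; intros k _. rewrite idM_sym. ring.
Qed.

Lemma svd_top_pos d A U s V : (1 <= d)%nat -> invertible d A -> is_svd d A U s V -> 0 < s O.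
Proof.
  intros Hd (B & HB) Hsvd. pose proof Hsvd as (_ & _ & Hs0 & _ & HA).
  destruct (Rle_lt_or_eq_dec 0 (s O) (Hs0 O ltac:(lia))) as [Hpos | Hzero]; [exact Hpos |].
  exfalso. destruct (HB O O ltac:(lia) ltac:(lia)) as [H1 _].
  rewrite idM_diag in H1. unfold mulM in H1. rewrite sumR_eq0 in H1; [lra |].
  intros k Hk. rewrite HA by lia.
  rewrite sumR_eq0; [ring |]. intros l Hl.
  pose proof (svd_antitone d A U s V O l Hsvd ltac:(lia) Hl). pose proof (Hs0 l Hl).
  replace (s l) with 0 by lra. ring.
Qed.

Lemma opnorm_svd d A U s V : (1 <= d)%nat -> is_svd d A U s V -> opnorm d A = s O.
Proof.
  intros Hd Hsvd. pose proof Hsvd as (HU & HV & Hs0 & _).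
  assert (HM : forall x, nsq d x = 1 -> vnorm d (applyM d A x) <= s O).
  { intros x Hx. rewrite <- (Rmult_1_r (s O)), <- (vnorm_unit d x Hx).
    apply vnorm_le_of_nsq; [apply Hs0; lia | apply (nsq_applyM_svd_le d A U s V x Hd Hsvd)]. }
  apply Rle_antisym; [apply (opnorm_le d A _ Hd HM) |].
  rewrite <- (vnorm_applyM_le_opnorm d A _ (col V O) Hd HM (nsq_col_orthogonal d V O HV Hd)).
  rewrite (vnorm_ext d _ (fun i => s O * col U O i))
    by (intros i Hi; apply (applyM_svd_col0 d A U s V i Hd Hsvd Hi)).
  rewrite vnorm_sqrt, nsq_scal, nsq_col_orthogonal, Rmult_1_r, sqrt_pow2 by (auto; lia).
  lra.
Qed.

Lemma sing_vals_svd d A : exists U V, is_svd d A U (sing_vals d A) V.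
Proof.
  unfold sing_vals. apply (epsilon_spec (inhabits (fun _ => 0)) (fun s => exists U V, is_svd d A U s V)).
  destruct (svd_exists d A) as (U & s & V & H). exists s, U, V. exact H.
Qed.

Definition rank_one_approx d (A : Mat) (kap sg : R) (u v : Vec) : Prop :=
  0 < sg /\ nsq d u = 1 /\ nsq d v = 1 /\ opnorm d A = sg /\
  (forall x, nsq d (applyM d A x) <= sg ^ 2 * nsq d x) /\
  (forall x, nsq d (fun j => applyM d A x j - sg * ip d v x * u j) <= (kap * sg) ^ 2 * nsq d x).

Lemma rank_one_approx_of_gap d A kap : (2 <= d)%nat -> 0 < kap ->
  invertible d A -> / kap <= gr d A -> exists sg u v, rank_one_approx d A kap sg u v.
Proof.
  intros Hd Hk Hinv Hgr. destruct (sing_vals_svd d A) as (U & V & Hsvd).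
  set (s := sing_vals d A) in *. pose proof Hsvd as (HU & HV & Hs0 & _).
  assert (Hpos : 0 < s O) by (apply (svd_top_pos d A U s V); auto; lia).
  assert (Hgap : s 1%nat <= kap * s O).
  { pose proof (Hs0 1%nat ltac:(lia)).
    destruct (Rle_lt_or_eq_dec 0 (s 1%nat) H) as [H1 | H1]; [| nra].
    unfold gr in Hgr. fold s in Hgr.
    apply (Rmult_le_compat_r (kap * s 1%nat)) in Hgr; [| nra].
    replace (/ kap * (kap * s 1%nat)) with (s 1%nat) in Hgr by (field; lra).
    replace (s O / s 1%nat * (kap * s 1%nat)) with (kap * s O) in Hgr by (field; lra).
    exact Hgr. }
  exists (s O), (col U O), (col V O).
  repeat split; auto using nsq_col_orthogonal with arith.
  - apply (opnorm_svd d A U s V); [lia | exact Hsvd].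
  - intros x. apply (nsq_applyM_svd_le d A U s V x); [lia | exact Hsvd].
  - intros x. eapply Rle_trans; [apply (nsq_svd_rank_one_error d A U s V x Hd Hsvd) |].
    apply Rmult_le_compat_r; [apply nsq_nonneg |]. apply pow_incr.
    pose proof (Hs0 1%nat ltac:(lia)). lra.
Qed.

Lemma Rabs_mul_add_bounds t a w :
  Rabs t * Rabs a - Rabs w <= Rabs (t * a + w) <= Rabs t * Rabs a + Rabs w.
Proof.
  rewrite <- Rabs_mult. split.
  - pose proof (Rabs_triang (t * a + w) (- w)). rewrite Rabs_Ropp in H.
    replace (t * a + w + - w) with (t * a) in H by ring. lra.
  - apply Rabs_triang.
Qed.

Lemma exp_le_compat x y : x <= y -> exp x <= exp y.
Proof.
  intros [Hlt | ->]; [apply Rlt_le, exp_increasing, Hlt | apply Rle_refl].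
Qed.

Lemma exp_neg_twice_le x : 0 <= x <= 1 / 2 -> exp (- (2 * x)) <= 1 - x.
Proof.
  intros Hx. rewrite exp_Ropp. pose proof (exp_ineq1_le (2 * x)). pose proof (exp_pos (2 * x)).
  apply (Rmult_le_reg_r (exp (2 * x))); [exact H0 |]. rewrite Rinv_l by lra. nra.
Qed.

Lemma exp_INR_mul x m : exp x ^ m = exp (INR m * x).
Proof.
  induction m as [| m IH]; [simpl; rewrite Rmult_0_l, exp_0; reflexivity |].
  rewrite S_INR. simpl pow. rewrite IH, <- exp_plus. f_equal. ring.
Qed.

Lemma exp_product_bounds q dl cc m :
  0 <= dl <= 1 / 2 -> 0 <= cc <= 1 / 2 -> 2 * dl <= q -> cc <= 3 * q ->
  exp (- (11 * INR (S m) * q)) <= (1 - dl) * (1 - cc) ^ m /\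
  (1 + dl) * (1 + cc) ^ m <= exp (11 * INR (S m) * q).
Proof.
  intros Hdl Hcc Hq Hcq. rewrite S_INR. pose proof (pos_INR m) as Hm.
  assert (Hmc : INR m * cc <= INR m * (3 * q)) by (apply Rmult_le_compat_l; lra).
  split.
  - assert (Hpow : exp (- (2 * cc)) ^ m <= (1 - cc) ^ m)
      by (apply pow_incr; split; [apply Rlt_le, exp_pos | apply exp_neg_twice_le; lra]).
    rewrite exp_INR_mul in Hpow.
    apply Rle_trans with (exp (- (2 * dl)) * exp (INR m * - (2 * cc))).
    + rewrite <- exp_plus. apply exp_le_compat. nra.
    + apply Rmult_le_compat; try (apply Rlt_le, exp_pos); [apply exp_neg_twice_le; lra | exact Hpow].
  - assert (Hpow : (1 + cc) ^ m <= exp cc ^ m)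
      by (apply pow_incr; split; [lra | apply exp_ineq1_le]).
    rewrite exp_INR_mul in Hpow.
    apply Rle_trans with (exp dl * exp (INR m * cc)).
    + apply Rmult_le_compat; [lra | apply pow_le; lra | apply exp_ineq1_le | exact Hpow].
    + rewrite <- exp_plus. apply exp_le_compat. nra.
Qed.

Section Chain.

Variables (d N : nat) (eps kap : R) (L : nat -> Mat) (sg : nat -> R) (u v : nat -> Vec).
Hypothesis Hd : (1 <= d)%nat.
Hypothesis Heps : 0 < eps <= 1 / 5.
Hypothesis Hkap : 0 < kap <= 1 / 6 * eps ^ 2.
Hypothesis Happrox : forall i, (1 <= i <= N)%nat -> rank_one_approx d (L i) kap (sg i) (u i) (v i).
Hypothesis Hrho : forall i, (1 <= i < N)%nat -> eps <= rho2 d (L i) (L (S i)).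

Let sg_pos i : (1 <= i <= N)%nat -> 0 < sg i.
Proof. intros Hi. apply (Happrox i Hi). Qed.

Let nsq_u i : (1 <= i <= N)%nat -> nsq d (u i) = 1.
Proof. intros Hi. apply (Happrox i Hi). Qed.

Let nsq_v i : (1 <= i <= N)%nat -> nsq d (v i) = 1.
Proof. intros Hi. apply (Happrox i Hi). Qed.

Let opnorm_L i : (1 <= i <= N)%nat -> opnorm d (L i) = sg i.
Proof. intros Hi. apply (Happrox i Hi). Qed.

Definition err i y : Vec := fun j => applyM d (L i) y j - sg i * ip d (v i) y * u i j.

Lemma applyM_rank_one_err i y j :
  applyM d (L i) y j = (sg i * ip d (v i) y) * u i j + err i y j.
Proof. unfold err. ring. Qed.

Lemma vnorm_err_le i y : (1 <= i <= N)%nat -> vnorm d (err i y) <= kap * sg i * vnorm d y.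
Proof.
  intros Hi. pose proof (sg_pos i Hi). apply vnorm_le_of_nsq; [nra |]. apply (Happrox i Hi).
Qed.

Lemma vnorm_applyM_le i y : (1 <= i <= N)%nat -> vnorm d (applyM d (L i) y) <= sg i * vnorm d y.
Proof.
  intros Hi. pose proof (sg_pos i Hi). apply vnorm_le_of_nsq; [lra |]. apply (Happrox i Hi).
Qed.

(* How well the output direction of [L K] feeds the input direction of [L (K+1)]. *)
Definition align K : R := ip d (v (S K)) (u K).

Lemma aligned_step K y t z : (1 <= K < N)%nat ->
  (forall i, (i < d)%nat -> y i = t * u K i + z i) ->
  exists t' z', (forall i, (i < d)%nat -> applyM d (L (S K)) y i = t' * u (S K) i + z' i) /\
    sg (S K) * (Rabs t * Rabs (align K) - vnorm d z) <= Rabs t'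
      <= sg (S K) * (Rabs t * Rabs (align K) + vnorm d z) /\
    vnorm d z' <= kap * sg (S K) * vnorm d y.
Proof.
  intros HK Hy. assert (HK1 : (1 <= S K <= N)%nat) by lia.
  exists (sg (S K) * (t * align K + ip d (v (S K)) z)), (err (S K) y). split; [| split].
  - intros i Hi. rewrite applyM_rank_one_err. f_equal. f_equal. f_equal.
    rewrite (ip_ext d _ _ _ Hy). apply ip_axpy.
  - pose proof (sg_pos (S K) HK1). pose proof (Rabs_ip_le_unit d (v (S K)) z (nsq_v (S K) HK1)).
    pose proof (Rabs_mul_add_bounds t (align K) (ip d (v (S K)) z)).
    rewrite Rabs_mult, (Rabs_pos_eq (sg (S K))) by lra. split; apply Rmult_le_compat_l; lra.
  - apply vnorm_err_le, HK1.
Qed.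

Lemma applyM_pair_decomp K x : (1 <= K < N)%nat -> nsq d x = 1 -> exists t' z',
  (forall i, (i < d)%nat -> applyM d (mulM d (L (S K)) (L K)) x i = t' * u (S K) i + z' i) /\
  sg (S K) * sg K * (Rabs (ip d (v K) x) * Rabs (align K) - kap) <= Rabs t'
    <= sg (S K) * sg K * (Rabs (ip d (v K) x) * Rabs (align K) + kap) /\
  vnorm d z' <= kap * sg (S K) * sg K.
Proof.
  intros HK Hx. assert (HK0 : (1 <= K <= N)%nat) by lia.
  set (s1 := sg K). set (s2 := sg (S K)).
  assert (Hs1 : 0 < s1) by exact (sg_pos K HK0). assert (Hs2 : 0 < s2) by (apply sg_pos; lia).
  destruct (aligned_step K (applyM d (L K) x) (s1 * ip d (v K) x) (err K x) HK
    (fun i _ => applyM_rank_one_err K x i)) as (t' & z' & Hrep & Ht' & Hz').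
  exists t', z'. split; [| split].
  - intros i Hi. rewrite applyM_mulM. apply Hrep, Hi.
  - pose proof (vnorm_err_le K x HK0) as Hz. rewrite (vnorm_unit d x Hx) in Hz. fold s1 in Hz.
    rewrite Rabs_mult, (Rabs_pos_eq s1) in Ht' by lra. fold s2 in Ht'.
    assert (s2 * vnorm d (err K x) <= s2 * (kap * s1 * 1)) by (apply Rmult_le_compat_l; lra).
    split; nra.
  - pose proof (vnorm_applyM_le K x HK0) as Hy. rewrite (vnorm_unit d x Hx) in Hy. fold s1 in Hy.
    fold s2 in Hz'. eapply Rle_trans; [exact Hz' |].
    replace (kap * s2 * s1) with (kap * s2 * (s1 * 1)) by ring.
    apply Rmult_le_compat_l; [nra | exact Hy].
Qed.

Lemma rho2_near_align K : (1 <= K < N)%nat ->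
  Rabs (align K) - 2 * kap <= rho2 d (L K) (L (S K)) <= Rabs (align K) + 2 * kap.
Proof.
  intros HK. assert (HK0 : (1 <= K <= N)%nat) by lia. assert (HK1 : (1 <= S K <= N)%nat) by lia.
  set (s1 := sg K). set (s2 := sg (S K)). set (a := Rabs (align K)).
  set (M2 := mulM d (L (S K)) (L K)).
  assert (Hs1 : 0 < s1) by exact (sg_pos K HK0). assert (Hs2 : 0 < s2) by exact (sg_pos (S K) HK1).
  assert (Ha : 0 <= a) by apply Rabs_pos.
  assert (Hup : forall x, nsq d x = 1 -> vnorm d (applyM d M2 x) <= s1 * s2 * (a + 2 * kap)).
  { intros x Hx. destruct (applyM_pair_decomp K x HK Hx) as (t' & z' & Hrep & Ht' & Hz').
    fold s1 s2 a M2 in Hrep, Ht', Hz'. rewrite (vnorm_ext d _ _ Hrep).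
    pose proof (vnorm_axpy_unit d (u (S K)) z' t' (nsq_u (S K) HK1)) as [_ H].
    pose proof (Rabs_ip_le_unit d (v K) x (nsq_v K HK0)) as Hip. rewrite (vnorm_unit d x Hx) in Hip.
    pose proof (Rabs_pos (ip d (v K) x)).
    assert (Rabs (ip d (v K) x) * a <= a) by nra. nra. }
  assert (Hlo : s1 * s2 * (a - 2 * kap) <= vnorm d (applyM d M2 (v K))).
  { destruct (applyM_pair_decomp K (v K) HK (nsq_v K HK0)) as (t' & z' & Hrep & Ht' & Hz').
    fold s1 s2 a M2 in Hrep, Ht', Hz'.
    rewrite <- nsq_ip, nsq_v, Rabs_R1, Rmult_1_l in Ht' by exact HK0.
    rewrite (vnorm_ext d _ _ Hrep).
    pose proof (vnorm_axpy_unit d (u (S K)) z' t' (nsq_u (S K) HK1)) as [H _]. nra. }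
  pose proof (opnorm_le d M2 _ Hd Hup) as Hop_up.
  pose proof (vnorm_applyM_le_opnorm d M2 _ (v K) Hd Hup (nsq_v K HK0)) as Hop_lo.
  unfold rho2. fold M2. rewrite (opnorm_L K HK0), (opnorm_L (S K) HK1). fold s1 s2.
  assert (Hdiv : opnorm d M2 / (s2 * s1) * (s2 * s1) = opnorm d M2) by (field; lra).
  split; apply (Rmult_le_reg_r (s2 * s1)); try nra; rewrite Hdiv; nra.
Qed.

(* [dl] bounds the off-axis part [z] of [t u + z] relative to [t]; [cc] bounds the
   per-step relative drift of [|t|] from [sg * rho2]. *)
Definition dl : R := 2 * kap / eps.
Definition cc : R := 3 * kap / eps ^ 2.

Let kap_scaled : exists q, 0 < q <= 1 / 6 /\ kap = q * eps ^ 2 /\ dl = 2 * q * eps /\ cc = 3 * q.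
Proof.
  exists (kap / eps ^ 2). unfold dl, cc. repeat split; try (field; lra).
  - apply Rdiv_lt_0_compat; nra.
  - apply (Rmult_le_reg_r (eps ^ 2)); [nra |]. unfold Rdiv.
    rewrite Rmult_assoc, Rinv_l by nra. lra.
Qed.

Lemma dl_cc_bounds : kap <= dl <= 1 / 2 /\ 0 <= cc <= 1 / 2.
Proof. destruct kap_scaled as (q & Hq & Hk & Hdl & Hcc). rewrite ?Hdl, ?Hcc, ?Hk. nra. Qed.

Lemma dl_cc_vs_ratio : 2 * dl <= kap / eps ^ 2 /\ cc <= 3 * (kap / eps ^ 2).
Proof.
  destruct kap_scaled as (q & Hq & Hk & Hdl & Hcc). rewrite Hdl, Hcc.
  replace (kap / eps ^ 2) with q by (rewrite Hk; field; lra). nra.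
Qed.

(* The error part stays within a factor [dl] of the main part from one step to the next. *)
Lemma err_budget : kap * (1 + dl) <= dl * (eps - 2 * kap - dl).
Proof.
  destruct kap_scaled as (q & Hq & Hk & Hdl & Hcc). rewrite ?Hdl, ?Hcc, ?Hk.
  assert (0 <= q * eps ^ 2 * (1 - 6 * q * eps - 4 * q)) by (apply Rmult_le_pos; nra).
  nra.
Qed.

Lemma drift_budget : 2 * kap + dl <= cc * eps.
Proof. destruct kap_scaled as (q & Hq & Hk & Hdl & Hcc). rewrite ?Hdl, ?Hcc, ?Hk. nra. Qed.

Definition sg_prod j : R := prodR j (fun k => sg (S k)).
Definition rho_prod j : R := prodR j (fun k => rho2 d (L (S k)) (L (S (S k)))).
Definition scale j : R := sg_prod (S j) * rho_prod j.

Lemma scale_S j : scale (S j) = scale j * sg (S (S j)) * rho2 d (L (S j)) (L (S (S j))).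
Proof. unfold scale, sg_prod, rho_prod. simpl. ring. Qed.

Lemma scale_pos j : (j < N)%nat -> 0 < scale j.
Proof.
  intros Hj. apply Rmult_lt_0_compat; apply prodR_pos; intros k Hk.
  - apply sg_pos. lia.
  - assert (eps <= rho2 d (L (S k)) (L (S (S k)))) by (apply Hrho; lia). lra.
Qed.

Lemma applyM_prodM_1 x i : (i < d)%nat -> applyM d (prodM d L 1) x i = applyM d (L 1) x i.
Proof. intros Hi. simpl. rewrite applyM_mulM. apply applyM_ext. intros j Hj. apply applyM_idM, Hj. Qed.

Lemma applyM_prodM_S j x i :
  applyM d (prodM d L (S j)) x i = applyM d (L (S j)) (applyM d (prodM d L j) x) i.
Proof. apply applyM_mulM. Qed.

Lemma upper_step K y t z T : (1 <= K < N)%nat ->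
  (forall i, (i < d)%nat -> y i = t * u K i + z i) -> Rabs t <= T -> vnorm d z <= dl * T ->
  exists t' z', (forall i, (i < d)%nat -> applyM d (L (S K)) y i = t' * u (S K) i + z' i) /\
    Rabs t' <= T * sg (S K) * rho2 d (L K) (L (S K)) * (1 + cc) /\
    vnorm d z' <= dl * (T * sg (S K) * rho2 d (L K) (L (S K)) * (1 + cc)).
Proof.
  destruct dl_cc_bounds as [Hdl Hcc]. pose proof err_budget. pose proof drift_budget.
  intros HK Hrep Ht Hz.
  set (r := rho2 d (L K) (L (S K))). set (s := sg (S K)).
  assert (HT : 0 <= T) by (pose proof (Rabs_pos t); lra).
  assert (Hs : 0 < s) by (apply sg_pos; lia).
  assert (Hr : eps <= r) by (apply Hrho, HK).
  pose proof (rho2_near_align K HK) as Hal. fold r in Hal.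
  destruct (aligned_step K y t z HK Hrep) as (t' & z' & Hrep' & Ht' & Hz'). fold s in Ht', Hz'.
  exists t', z'. split; [exact Hrep' | split].
  - assert (Rabs t * Rabs (align K) <= T * Rabs (align K))
      by (apply Rmult_le_compat_r; [apply Rabs_pos | exact Ht]).
    assert (cc * eps <= cc * r) by (apply Rmult_le_compat_l; lra).
    assert (T * (Rabs (align K) + dl) <= T * (r * (1 + cc))) by (apply Rmult_le_compat_l; lra).
    assert (s * (Rabs t * Rabs (align K) + vnorm d z) <= s * (T * (r * (1 + cc))))
      by (apply Rmult_le_compat_l; lra).
    lra.
  - pose proof (vnorm_axpy_unit d (u K) z t (nsq_u K ltac:(lia))) as [_ Hy].
    rewrite <- (vnorm_ext d _ _ Hrep) in Hy.
    assert (Hkr : kap * (1 + dl) <= dl * r * (1 + cc)).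
    { assert (dl * eps <= dl * r) by (apply Rmult_le_compat_l; lra).
      assert (0 <= dl * r * cc) by (apply Rmult_le_pos; [apply Rmult_le_pos |]; lra).
      assert (0 <= dl * (2 * kap + dl)) by (apply Rmult_le_pos; lra).
      lra. }
    assert (kap * s * vnorm d y <= kap * s * (T * (1 + dl))) by (apply Rmult_le_compat_l; nra).
    assert (s * T * (kap * (1 + dl)) <= s * T * (dl * r * (1 + cc)))
      by (apply Rmult_le_compat_l; [nra | exact Hkr]).
    lra.
Qed.

Lemma lower_step K y t z T : (1 <= K < N)%nat ->
  (forall i, (i < d)%nat -> y i = t * u K i + z i) -> 0 <= T -> T <= Rabs t ->
  vnorm d z <= dl * Rabs t ->
  exists t' z', (forall i, (i < d)%nat -> applyM d (L (S K)) y i = t' * u (S K) i + z' i) /\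
    T * sg (S K) * rho2 d (L K) (L (S K)) * (1 - cc) <= Rabs t' /\ vnorm d z' <= dl * Rabs t'.
Proof.
  destruct dl_cc_bounds as [Hdl Hcc]. pose proof err_budget. pose proof drift_budget.
  intros HK Hrep HT Ht Hz.
  set (r := rho2 d (L K) (L (S K))). set (s := sg (S K)). set (a := Rabs (align K)).
  assert (Hs : 0 < s) by (apply sg_pos; lia).
  assert (Hr : eps <= r) by (apply Hrho, HK).
  pose proof (rho2_near_align K HK) as Hal. fold r a in Hal.
  destruct (aligned_step K y t z HK Hrep) as (t' & z' & Hrep' & Ht' & Hz'). fold s a in Ht', Hz'.
  assert (cc * eps <= cc * r) by (apply Rmult_le_compat_l; lra).
  assert (Hadl : r * (1 - cc) <= a - dl) by lra.
  assert (0 <= r * (1 - cc)) by nra.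
  assert (Hmain : s * (Rabs t * (a - dl)) <= Rabs t').
  { assert (s * (Rabs t * (a - dl)) <= s * (Rabs t * a - vnorm d z))
      by (apply Rmult_le_compat_l; nra).
    lra. }
  exists t', z'. split; [exact Hrep' | split].
  - assert (T * (r * (1 - cc)) <= Rabs t * (a - dl)) by (apply Rmult_le_compat; lra).
    assert (s * (T * (r * (1 - cc))) <= s * (Rabs t * (a - dl))) by (apply Rmult_le_compat_l; lra).
    lra.
  - pose proof (vnorm_axpy_unit d (u K) z t (nsq_u K ltac:(lia))) as [_ Hy].
    rewrite <- (vnorm_ext d _ _ Hrep) in Hy.
    assert (Hka : kap * (1 + dl) <= dl * (a - dl)).
    { assert (dl * (eps - 2 * kap - dl) <= dl * (a - dl)) by (apply Rmult_le_compat_l; lra).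
      lra. }
    pose proof (Rabs_pos t).
    assert (kap * s * vnorm d y <= kap * s * (Rabs t * (1 + dl)))
      by (apply Rmult_le_compat_l; [nra | lra]).
    assert (s * Rabs t * (kap * (1 + dl)) <= s * Rabs t * (dl * (a - dl)))
      by (apply Rmult_le_compat_l; [nra | exact Hka]).
    assert (dl * (s * (Rabs t * (a - dl))) <= dl * Rabs t') by (apply Rmult_le_compat_l; lra).
    lra.
Qed.

Lemma upper_chain j : (j < N)%nat -> forall x, nsq d x = 1 -> exists t z,
  (forall i, (i < d)%nat -> applyM d (prodM d L (S j)) x i = t * u (S j) i + z i) /\
  Rabs t <= scale j * (1 + cc) ^ j /\ vnorm d z <= dl * (scale j * (1 + cc) ^ j).
Proof.
  destruct dl_cc_bounds as [Hdl Hcc].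
  intros Hj x Hx. induction j as [| j IH].
  - assert (H1 : (1 <= 1 <= N)%nat) by lia. pose proof (sg_pos 1 H1) as Hs1.
    exists (sg 1 * ip d (v 1) x), (err 1 x). split; [| split].
    + intros i Hi. rewrite applyM_prodM_1 by exact Hi. apply applyM_rank_one_err.
    + pose proof (Rabs_ip_le_unit d (v 1) x (nsq_v 1 H1)) as Hip.
      rewrite (vnorm_unit d x Hx) in Hip.
      unfold scale, sg_prod, rho_prod. simpl. rewrite Rabs_mult, (Rabs_pos_eq (sg 1)) by lra.
      pose proof (Rabs_pos (ip d (v 1) x)). nra.
    + pose proof (vnorm_err_le 1 x H1) as Herr. rewrite (vnorm_unit d x Hx) in Herr.
      unfold scale, sg_prod, rho_prod. simpl. nra.
  - destruct (IH ltac:(lia)) as (t & z & Hrep & Ht & Hz).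
    destruct (upper_step (S j) _ t z _ ltac:(lia) Hrep Ht Hz) as (t' & z' & Hrep' & Ht' & Hz').
    exists t', z'.
    replace (scale (S j) * (1 + cc) ^ S j)
      with (scale j * (1 + cc) ^ j * sg (S (S j)) * rho2 d (L (S j)) (L (S (S j))) * (1 + cc))
      by (rewrite scale_S; simpl; ring).
    split; [intros i Hi; rewrite applyM_prodM_S; apply Hrep', Hi | split; assumption].
Qed.

Lemma lower_chain j : (j < N)%nat -> exists t z,
  (forall i, (i < d)%nat -> applyM d (prodM d L (S j)) (v 1) i = t * u (S j) i + z i) /\
  scale j * (1 - cc) ^ j <= Rabs t /\ vnorm d z <= dl * Rabs t.
Proof.
  destruct dl_cc_bounds as [Hdl Hcc].
  intros Hj. induction j as [| j IH].
  - assert (H1 : (1 <= 1 <= N)%nat) by lia. pose proof (sg_pos 1 H1) as Hs1.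
    assert (Ht : sg 1 * ip d (v 1) (v 1) = sg 1) by (rewrite <- nsq_ip, nsq_v by exact H1; ring).
    exists (sg 1), (err 1 (v 1)). rewrite Rabs_pos_eq by lra. split; [| split].
    + intros i Hi. rewrite applyM_prodM_1, applyM_rank_one_err, Ht by exact Hi. reflexivity.
    + unfold scale, sg_prod, rho_prod. simpl. lra.
    + pose proof (vnorm_err_le 1 (v 1) H1) as Herr. rewrite (vnorm_unit d (v 1) (nsq_v 1 H1)) in Herr.
      nra.
  - destruct (IH ltac:(lia)) as (t & z & Hrep & Ht & Hz).
    assert (HT : 0 <= scale j * (1 - cc) ^ j)
      by (apply Rmult_le_pos; [apply Rlt_le, scale_pos; lia | apply pow_le; lra]).
    destruct (lower_step (S j) _ t z _ ltac:(lia) Hrep HT Ht Hz) as (t' & z' & Hrep' & Ht' & Hz').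
    exists t', z'.
    replace (scale (S j) * (1 - cc) ^ S j)
      with (scale j * (1 - cc) ^ j * sg (S (S j)) * rho2 d (L (S j)) (L (S (S j))) * (1 - cc))
      by (rewrite scale_S; simpl; ring).
    split; [intros i Hi; rewrite applyM_prodM_S; apply Hrep', Hi | split; assumption].
Qed.

Lemma rho_ratio_bounds : (1 <= N)%nat ->
  (1 - dl) * (1 - cc) ^ (N - 1) <= rho d L N / rho_prod (N - 1)
  <= (1 + dl) * (1 + cc) ^ (N - 1).
Proof.
  intros HN. set (n := (N - 1)%nat). assert (Hn : (n < N)%nat) by (unfold n; lia).
  replace N with (S n) by (unfold n; lia).
  destruct dl_cc_bounds as [Hdl Hcc].
  set (P := prodM d L (S n)).
  assert (Hsc : 0 < scale n) by exact (scale_pos n Hn).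
  assert (Hrho_eq : rho d L (S n) / rho_prod n = opnorm d P / scale n).
  { unfold rho, scale, sg_prod. fold P.
    rewrite (prodR_ext (S n) _ (fun k => sg (S k))) by (intros k Hk; apply opnorm_L; lia).
    field. split; apply Rgt_not_eq; apply prodR_pos; intros k Hk.
    - assert (eps <= rho2 d (L (S k)) (L (S (S k)))) by (apply Hrho; lia). lra.
    - apply sg_pos. lia. }
  rewrite Hrho_eq.
  assert (Hup : forall x, nsq d x = 1 -> vnorm d (applyM d P x) <= (1 + dl) * (scale n * (1 + cc) ^ n)).
  { intros x Hx. destruct (upper_chain n Hn x Hx) as (t & z & Hrep & Ht & Hz).
    rewrite (vnorm_ext d (applyM d P x) _ Hrep).
    pose proof (vnorm_axpy_unit d (u (S n)) z t (nsq_u (S n) ltac:(lia))) as [_ H]. lra. }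
  assert (Hlo : (1 - dl) * (scale n * (1 - cc) ^ n) <= opnorm d P).
  { destruct (lower_chain n Hn) as (t & z & Hrep & Ht & Hz).
    eapply Rle_trans; [| apply (vnorm_applyM_le_opnorm d P _ (v 1) Hd Hup (nsq_v 1 ltac:(lia)))].
    rewrite (vnorm_ext d (applyM d P (v 1)) _ Hrep).
    pose proof (vnorm_axpy_unit d (u (S n)) z t (nsq_u (S n) ltac:(lia))) as [H _].
    assert ((1 - dl) * (scale n * (1 - cc) ^ n) <= (1 - dl) * Rabs t)
      by (apply Rmult_le_compat_l; lra).
    lra. }
  pose proof (opnorm_le d P _ Hd Hup) as Hop.
  assert (Hdiv : opnorm d P / scale n * scale n = opnorm d P) by (field; lra).
  split; apply (Rmult_le_reg_r (scale n) _ _ Hsc); rewrite Hdiv.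
  - replace ((1 - dl) * (1 - cc) ^ n * scale n) with ((1 - dl) * (scale n * (1 - cc) ^ n))
      by ring. exact Hlo.
  - replace ((1 + dl) * (1 + cc) ^ n * scale n) with ((1 + dl) * (scale n * (1 + cc) ^ n))
      by ring. exact Hop.
Qed.

Lemma rho_ratio_exp_bounds : (1 <= N)%nat ->
  exp (- (11 * INR N * kap / eps ^ 2)) <= rho d L N / rho_prod (N - 1)
  <= exp (11 * INR N * kap / eps ^ 2).
Proof.
  intros HN. destruct (rho_ratio_bounds HN) as [Hlo Hup].
  destruct dl_cc_bounds as [Hdl Hcc]. destruct dl_cc_vs_ratio as [Hdq Hcq].
  replace (INR N) with (INR (S (N - 1))) by (f_equal; lia).
  replace (11 * INR (S (N - 1)) * kap / eps ^ 2) with (11 * INR (S (N - 1)) * (kap / eps ^ 2))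
    by (field; lra).
  destruct (exp_product_bounds (kap / eps ^ 2) dl cc (N - 1) ltac:(lra) Hcc Hdq Hcq). lra.
Qed.

End Chain.

Lemma choice_on {A : Type} (P : nat -> Prop) (Q : nat -> A -> Prop) :
  inhabited A -> (forall i, P i -> exists x, Q i x) -> exists f, forall i, P i -> Q i (f i).
Proof.
  intros Hinh H. exists (fun i => epsilon Hinh (Q i)).
  intros i Hi. apply epsilon_spec, H, Hi.
Qed.

Theorem theorem2p4 (d n : nat) (eps kappa : R) (L : nat -> Mat) :
  (2 <= d)%nat -> (36 <= n)%nat ->
  0 < eps -> eps <= 1 / 5 ->
  0 < kappa -> kappa <= 1 / 6 * eps ^ 2 ->
  (forall i, (1 <= i <= n)%nat -> invertible d (L i)) ->
  (forall i, (1 <= i <= n)%nat -> / kappa <= gr d (L i)) ->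
  (forall i, (1 <= i <= n - 1)%nat -> eps <= rho2 d (L i) (L (S i))) ->
  exp (- (11 * INR n * kappa / eps ^ 2))
    <= rho d L n / prodR (n - 1) (fun k => rho2 d (L (S k)) (L (S (S k))))
  /\ rho d L n / prodR (n - 1) (fun k => rho2 d (L (S k)) (L (S (S k))))
    <= exp (11 * INR n * kappa / eps ^ 2).
Proof.
  intros Hd Hn He0 He1 Hk0 Hk1 Hinv Hgr Hrho.
  destruct (choice_on (fun i => (1 <= i <= n)%nat)
    (fun i (p : R * Vec * Vec) => rank_one_approx d (L i) kappa (fst (fst p)) (snd (fst p)) (snd p))
    (inhabits (0, fun _ => 0, fun _ => 0))) as [f Hf].
  { intros i Hi. destruct (rank_one_approx_of_gap d (L i) kappa Hd Hk0 (Hinv i Hi) (Hgr i Hi))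
      as (sg & u & v & H). exists (sg, u, v). exact H. }
  apply (rho_ratio_exp_bounds d n eps kappa L
    (fun i => fst (fst (f i))) (fun i => snd (fst (f i))) (fun i => snd (f i)));
    [lia | lra | lra | exact Hf | intros i Hi; apply Hrho; lia | lia].
Qed.
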